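(* Let $m\in\{1,2\}$, $K>0$, $\gamma=3$, and let $(\rho,u)$ be a smooth solution ($\rho>0$, $r>0$) of the radially symmetric isentropic Euler equations $$(r^m\rho)_t+(r^m\rho u)_r=0,\qquad (r^m\rho u)_t+(r^m\rho u^2)_r+r^m p_r=0,\qquad p=K\rho^\gamma,$$ in the supersonic inward regime $c_1<c_2<0$. Then: (i) If the 1-wave is rarefaction (R), the 2-wave can only change from R to compression (C); if the 2-wave is R, the 1-wave can only change from R to C. (ii) If the 1-wave is C, the 2-wave can only change from C to R; if the 2-wave is C, the 1-wave can only change from C to R.
   Context: Here $h=\sqrt{K\gamma}\,\rho^{(\gamma-1)/2}$, $c_1=u-h$, $c_2=u+h$, and $$\alpha=u_r+\tfrac{2}{\gamma-1}h_r+\tfrac{m}{r}\tfrac{hu}{c_2},\qquad \beta=u_r-\tfrac{2}{\gamma-1}h_r-\tfrac{m}{r}\tfrac{hu}{c_1}.$$ The 1-wave is rarefaction (compression) at a point if $\beta>0$ ($\beta<0$); the 2-wave is rarefaction (compression) if $\alpha>0$ ($\alpha<0$). Characteristic flow maps: $\partial_t\xi(r_0,t)=c_1(\xi(r_0,t),t)$, $\partial_t\psi(r_0,t)=c_2(\psi(r_0,t),t)$, $\xi(r_0,0)=\psi(r_0,0)=r_0$. A change of the 2-wave from C to R means there are $r_0,t^*,\varepsilon>0$ such that $g(t)=\alpha(\psi(r_0,t),t)$ satisfies $g(t^* )=0$, $g<0$ on $(t^*-\varepsilon,t^* )$, $g>0$ on $(t^*,t^*+\varepsilon)$ (from R to C: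 opposite signs); a change of the 1-wave is defined likewise with $\beta(\xi(r_0,t),t)$. ''If the 1-wave is R then the 2-wave can only change from R to C'' means no C-to-R change of the 2-wave occurs at a time $t^*$ where the 1-wave is R at the crossing point; the other items are interpreted analogously. *)

From Stdlib Require Import Reals List.
From Coquelicot Require Import Coquelicot.
Open Scope R_scope.

Definition Dr (f : R -> R -> R) : R -> R -> R :=
  fun r t => Derive (fun s => f s t) r.
Definition Dt (f : R -> R -> R) : R -> R -> R :=
  fun r t => Derive (fun s => f r s) t.

Fixpoint Diter (l : list bool) (f : R -> R -> R) : R -> R -> R :=
  match l with
  | nil => f
  | b :: l' => (if b then Dr else Dt) (Diter l' f)
  end.

Definition open_domain (Om : R -> R -> Prop) : Prop :=
  open (fun p : R * R => Om (fst p) (snd p)).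

Definition smooth_on (Om : R -> R -> Prop) (f : R -> R -> R) : Prop :=
  forall (l : list bool) (r t : R), Om r t ->
    ex_derive (fun s => Diter l f s t) r /\
    ex_derive (fun s => Diter l f r s) t /\
    continuous (fun p : R * R => Diter l f (fst p) (snd p)) (r, t).

Definition pressure (K gamma : R) (rho : R -> R -> R) : R -> R -> R :=
  fun r t => K * Rpower (rho r t) gamma.

Definition euler_solution (m : nat) (K gamma : R) (Om : R -> R -> Prop)
    (rho u : R -> R -> R) : Prop :=
  forall r t, Om r t ->
    Dt (fun r t => r ^ m * rho r t) r t
      + Dr (fun r t => r ^ m * rho r t * u r t) r t = 0 /\
    Dt (fun r t => r ^ m * rho r t * u r t) r t
      + Dr (fun r t => r ^ m * rho r t * (u r t) ^ 2) r t
      + r ^ m * Dr (pressure K gamma rho) r t = 0.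

Definition hh (K gamma : R) (rho : R -> R -> R) : R -> R -> R :=
  fun r t => sqrt (K * gamma) * Rpower (rho r t) ((gamma - 1) / 2).
Definition speed1 (K gamma : R) (rho u : R -> R -> R) : R -> R -> R :=
  fun r t => u r t - hh K gamma rho r t.
Definition speed2 (K gamma : R) (rho u : R -> R -> R) : R -> R -> R :=
  fun r t => u r t + hh K gamma rho r t.

(** Wave-type indicators alpha (2-wave) and beta (1-wave). *)
Definition alpha (m : nat) (K gamma : R) (rho u : R -> R -> R) : R -> R -> R :=
  fun r t => Dr u r t + 2 / (gamma - 1) * Dr (hh K gamma rho) r t
             + INR m / r * (hh K gamma rho r t * u r t) / speed2 K gamma rho u r t.
Definition beta (m : nat) (K gamma : R) (rho u : R -> R -> R) : R -> R -> R :=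
  fun r t => Dr u r t - 2 / (gamma - 1) * Dr (hh K gamma rho) r t
             - INR m / r * (hh K gamma rho r t * u r t) / speed1 K gamma rho u r t.

Definition char_curve (c : R -> R -> R) (Om : R -> R -> Prop)
    (r0 a b : R) (X : R -> R) : Prop :=
  a < 0 < b /\ X 0 = r0 /\
  forall t, a < t < b -> Om (X t) t /\ is_derive X t (c (X t) t).

Definition change_C_to_R (g : R -> R) (tstar eps : R) : Prop :=
  0 < eps /\ g tstar = 0 /\
  (forall t, tstar - eps < t < tstar -> g t < 0) /\
  (forall t, tstar < t < tstar + eps -> 0 < g t).
Definition change_R_to_C (g : R -> R) (tstar eps : R) : Prop :=
  0 < eps /\ g tstar = 0 /\
  (forall t, tstar - eps < t < tstar -> 0 < g t) /\
  (forall t, tstar < t < tstar + eps -> g t < 0).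

From Stdlib Require Import Reals Lra List.
From Coquelicot Require Import Coquelicot.
Open Scope R_scope.

(* For gamma = 3 the Riemann invariants w2 = u + h and w1 = u - h are the characteristic
   speeds c2 and c1, and the Euler equations become the symmetric pair of transport laws
   w_t + w w_r = - m (w^2 - v^2) / (4 r), with (w, v) = (w2, w1) or (w1, w2).  In these
   variables alpha and beta are one expression I(w, v) = w_r + m (w^2 - v^2) / (4 r w) with
   the invariants exchanged.  Differentiating I(w, v) along a w-characteristic, the second
   derivative of w cancels, and at a zero of I(w, v) what remains is
   d/dt I(w, v) = m v^2 / (2 r w) * I(v, w).  In the supersonic inward regime w < 0, so this
   coefficient is negative: at a zero of alpha on a 2-characteristic, alpha is strictly
   decreasing when beta > 0 and strictly increasing when beta < 0, which rules out the
   corresponding sign change; the same holds for beta on a 1-characteristic. *)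

Lemma DL_regular_1_differentiable f r t :
  DL_regular_n f 1 r t -> differentiable_pt_lim f r t (Dr f r t) (Dt f r t).
Proof.
  intros [D [d Hd]] eps.
  set (k := Rabs D + 1).
  assert (Hk : 0 < k) by (pose proof (Rabs_pos D); unfold k; lra).
  assert (Hek : 0 < eps / k) by (apply Rdiv_lt_0_compat; [apply cond_pos | exact Hk]).
  exists (mkposreal _ (Rmin_pos _ _ (cond_pos d) Hek)); simpl.
  intros u v Hu Hv.
  pose proof (Rmin_l d (eps / k)); pose proof (Rmin_r d (eps / k)).
  specialize (Hd u v ltac:(lra) ltac:(lra)).
  assert (Hpol : DL_pol 1 f r t (u - r) (v - t)
                 = f r t + (Dr f r t * (u - r) + Dt f r t * (v - t))).
  { unfold DL_pol, differential, partial_derive, Dr, Dt, Binomial.C; simpl; field. }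
  rewrite Hpol in Hd.
  set (M := Rmax (Rabs (u - r)) (Rabs (v - t))) in *.
  assert (HM0 : 0 <= M) by (apply (Rle_trans _ _ _ (Rabs_pos _) (Rmax_l _ _))).
  assert (HMk : k * M <= eps).
  { assert (HM : M < eps / k) by (apply Rmax_lub_lt; lra).
    apply (Rmult_lt_compat_l k) in HM; [|exact Hk].
    replace (k * (eps / k)) with (pos eps) in HM by (field; lra). lra. }
  assert (HD : D <= k) by (pose proof (RRle_abs D); unfold k; lra).
  replace (f u v - f r t - (Dr f r t * (u - r) + Dt f r t * (v - t)))
    with (f u v - (f r t + (Dr f r t * (u - r) + Dt f r t * (v - t)))) by ring.
  simpl in Hd; nra.
Qed.

Lemma smooth_on_ex_diff_n Om f : smooth_on Om f ->
  forall n l r t, Om r t -> ex_diff_n (Diter l f) n r t.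
Proof.
  intros Hf n; induction n as [|n IH]; intros l r t H;
    destruct (Hf l r t H) as [Hr [Ht Hc]].
  - split; [apply continuity_2d_pt_filterlim, Hc | exact I].
  - split; [apply continuity_2d_pt_filterlim, Hc |].
    repeat split; [exact Hr | exact Ht | exact (IH (true :: l) r t H) |
                   exact (IH (false :: l) r t H)].
Qed.

Section SmoothOnOpen.

Variable Om : R -> R -> Prop.
Hypothesis HOm : open_domain Om.

Lemma open_domain_locally_2d r t : Om r t -> locally_2d Om r t.
Proof. intros H; apply locally_2d_locally, (HOm (r, t)), H. Qed.

Lemma open_domain_locally_r r t : Om r t -> locally r (fun s => Om s t).
Proof. intros H; apply locally_2d_1d_const_y, open_domain_locally_2d, H. Qed.

Lemma open_domain_locally_t r t : Om r t -> locally t (fun s => Om r s).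
Proof. intros H; apply locally_2d_1d_const_x, open_domain_locally_2d, H. Qed.

Lemma smooth_on_differentiable f l r t : smooth_on Om f -> Om r t ->
  differentiable_pt_lim (Diter l f) r t (Diter (true :: l) f r t) (Diter (false :: l) f r t).
Proof.
  intros Hf H; apply DL_regular_1_differentiable, Taylor_Lagrange_2d.
  generalize (open_domain_locally_2d r t H); apply locally_2d_impl, locally_2d_forall.
  intros u v Huv; exact (smooth_on_ex_diff_n Om f Hf 2 l u v Huv).
Qed.

Lemma smooth_on_is_derive_along f l (X : R -> R) t dX :
  smooth_on Om f -> Om (X t) t -> is_derive X t dX ->
  is_derive (fun s => Diter l f (X s) s) t
    (Diter (true :: l) f (X t) t * dX + Diter (false :: l) f (X t) t).
Proof.
  intros Hf H HX; apply is_derive_Reals.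
  rewrite <- (Rmult_1_r (Diter (false :: l) f (X t) t)).
  apply derivable_pt_lim_comp_2d.
  - exact (smooth_on_differentiable f l _ _ Hf H).
  - apply is_derive_Reals, HX.
  - apply derivable_pt_lim_id.
Qed.

Lemma smooth_on_Dr_Dt f r t : smooth_on Om f -> Om r t -> Dr (Dt f) r t = Dt (Dr f) r t.
Proof.
  intros Hf H; apply Schwarz.
  - generalize (open_domain_locally_2d r t H); apply locally_2d_impl, locally_2d_forall.
    intros u v Huv.
    destruct (Hf nil u v Huv) as [Hr [Ht _]].
    destruct (Hf (false :: nil) u v Huv) as [Htr _].
    destruct (Hf (true :: nil) u v Huv) as [_ [Hrt _]].
    repeat split; assumption.
  - apply continuity_2d_pt_filterlim, (Hf (true :: false :: nil) r t H).
  - apply continuity_2d_pt_filterlim, (Hf (false :: true :: nil) r t H).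
Qed.

Lemma smooth_on_Diter_lin f g c l r t : smooth_on Om f -> smooth_on Om g -> Om r t ->
  Diter l (fun r t => f r t + c * g r t) r t = Diter l f r t + c * Diter l g r t.
Proof.
  intros Hf Hg; revert r t; induction l as [|[|] l IH]; intros r t H; [reflexivity | |]; simpl.
  - unfold Dr; rewrite (Derive_ext_loc _ (fun s => Diter l f s t + c * Diter l g s t)).
    + rewrite Derive_plus, Derive_scal; [reflexivity | apply (Hf l r t H) |].
      apply ex_derive_scal, (Hg l r t H).
    + generalize (open_domain_locally_r r t H); apply filter_imp; intros s Hs; apply IH, Hs.
  - unfold Dt; rewrite (Derive_ext_loc _ (fun s => Diter l f r s + c * Diter l g r s)).
    + rewrite Derive_plus, Derive_scal; [reflexivity | apply (Hf l r t H) |].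
      apply ex_derive_scal, (Hg l r t H).
    + generalize (open_domain_locally_t r t H); apply filter_imp; intros s Hs; apply IH, Hs.
Qed.

Lemma smooth_on_lin f g c : smooth_on Om f -> smooth_on Om g ->
  smooth_on Om (fun r t => f r t + c * g r t).
Proof.
  intros Hf Hg l r t H.
  destruct (Hf l r t H) as [Hfr [Hft Hfc]]; destruct (Hg l r t H) as [Hgr [Hgt Hgc]].
  repeat split.
  - apply (ex_derive_ext_loc (fun s => Diter l f s t + c * Diter l g s t)).
    + generalize (open_domain_locally_r r t H); apply filter_imp; intros s Hs.
      symmetry; apply smooth_on_Diter_lin; assumption.
    + apply (ex_derive_plus _ (fun s => c * Diter l g s t)); [| apply ex_derive_scal]; assumption.
  - apply (ex_derive_ext_loc (fun s => Diter l f r s + c * Diter l g r s)).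
    + generalize (open_domain_locally_t r t H); apply filter_imp; intros s Hs.
      symmetry; apply smooth_on_Diter_lin; assumption.
    + apply (ex_derive_plus _ (fun s => c * Diter l g r s)); [| apply ex_derive_scal]; assumption.
  - apply (continuous_ext_loc _
      (fun p : R * R => Diter l f (fst p) (snd p) + c * Diter l g (fst p) (snd p))).
    + generalize (HOm (r, t) H); apply filter_imp; intros p Hp.
      symmetry; apply smooth_on_Diter_lin; assumption.
    + apply (continuous_plus _ (fun p : R * R => c * Diter l g (fst p) (snd p))); [exact Hfc |].
      apply (continuous_scal_r c (fun p : R * R => Diter l g (fst p) (snd p))), Hgc.
Qed.

End SmoothOnOpen.

Lemma is_derive_neg_below_right g t d : is_derive g t d -> d < 0 ->
  exists delta : posreal, forall s, t < s < t + delta -> g s < g t.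
Proof.
  intros Hg Hd; apply is_derive_Reals in Hg.
  destruct (Hg (- d / 2) ltac:(lra)) as [delta Hdelta].
  exists delta; intros s Hs.
  specialize (Hdelta (s - t) ltac:(lra) ltac:(rewrite Rabs_right; lra)).
  replace (t + (s - t)) with s in Hdelta by ring.
  apply Rabs_def2 in Hdelta as [Hlt _].
  assert (Hq : (g s - g t) / (s - t) < 0) by lra.
  assert (Hst : 0 < s - t) by lra.
  apply (Rmult_lt_compat_r (s - t)) in Hq; [|exact Hst].
  replace ((g s - g t) / (s - t) * (s - t)) with (g s - g t) in Hq by (field; lra).
  lra.
Qed.

Lemma change_C_to_R_derive_nonneg g t eps d :
  change_C_to_R g t eps -> is_derive g t d -> 0 <= d.
Proof.
  intros [Heps [Hzero [_ Hafter]]] Hg.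
  apply Rnot_lt_le; intros Hd.
  destruct (is_derive_neg_below_right g t d Hg Hd) as [delta Hbelow].
  set (s := t + Rmin delta eps / 2).
  assert (Hmin : 0 < Rmin delta eps) by (apply Rmin_pos; [apply cond_pos | exact Heps]).
  pose proof (Rmin_l delta eps); pose proof (Rmin_r delta eps).
  specialize (Hbelow s ltac:(unfold s; lra)); specialize (Hafter s ltac:(unfold s; lra)).
  lra.
Qed.

Lemma change_R_to_C_derive_nonpos g t eps d :
  change_R_to_C g t eps -> is_derive g t d -> d <= 0.
Proof.
  intros [Heps [Hzero [Hbefore Hafter]]] Hg.
  assert (Hopp : 0 <= - d).
  { apply (change_C_to_R_derive_nonneg (fun s => - g s) t eps).
    - repeat split; [exact Heps | lra | |]; intros s Hs.
      + specialize (Hbefore s Hs); lra.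
      + specialize (Hafter s Hs); lra.
    - apply (is_derive_opp g), Hg. }
  lra.
Qed.

Lemma is_derive_indicator_expr (m : R) (a w v X : R -> R) t da dw dv dX :
  is_derive a t da -> is_derive w t dw -> is_derive v t dv -> is_derive X t dX ->
  X t <> 0 -> w t <> 0 ->
  is_derive (fun s => a s + m * (w s ^ 2 - v s ^ 2) / (4 * X s * w s)) t
    (da + m * ((2 * w t * dw - 2 * v t * dv) * (X t * w t)
               - (w t ^ 2 - v t ^ 2) * (dX * w t + X t * dw)) / (4 * (X t * w t) ^ 2)).
Proof.
  intros Ha Hw Hv HX HX0 Hw0.
  auto_derive.
  - repeat split; try (eexists; eassumption); apply Rmult_integral_contrapositive; split;
      [apply Rmult_integral_contrapositive; split; [lra | exact HX0] | exact Hw0].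
  - replace (Derive (fun s => a s) t) with da by (symmetry; apply is_derive_unique, Ha).
    replace (Derive (fun s => w s) t) with dw by (symmetry; apply is_derive_unique, Hw).
    replace (Derive (fun s => v s) t) with dv by (symmetry; apply is_derive_unique, Hv).
    replace (Derive (fun s => X s) t) with dX by (symmetry; apply is_derive_unique, HX).
    field; split; assumption.
Qed.

(* [a], [b], [A] stand for w_r, v_r, w_rr and [wt], [vt], [wtr] for w_t, v_t, w_tr at one point;
   the left-hand side is the derivative along the characteristic r' = w. *)
Lemma indicator_riccati_identity (m r w v a b A wt vt wtr : R) :
  r <> 0 -> w <> 0 -> v <> 0 ->
  wt + w * a = - m * (w ^ 2 - v ^ 2) / (4 * r) ->
  vt + v * b = - m * (v ^ 2 - w ^ 2) / (4 * r) ->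
  wtr = - a ^ 2 - w * A - m * (2 * (w * a - v * b) * r - (w ^ 2 - v ^ 2)) / (4 * r ^ 2) ->
  a + m * (w ^ 2 - v ^ 2) / (4 * r * w) = 0 ->
  (A * w + wtr) + m * ((2 * w * (a * w + wt) - 2 * v * (b * w + vt)) * (r * w)
                       - (w ^ 2 - v ^ 2) * (w * w + r * (a * w + wt))) / (4 * (r * w) ^ 2)
  = m * v ^ 2 / (2 * r * w) * (b + m * (v ^ 2 - w ^ 2) / (4 * r * v)).
Proof.
  intros Hr Hw Hv Hwt Hvt Hwtr Hzero.
  assert (Ha : a = - m * (w ^ 2 - v ^ 2) / (4 * r * w)) by lra.
  assert (Ewt : wt = - m * (w ^ 2 - v ^ 2) / (4 * r) - w * a) by lra.
  assert (Evt : vt = - m * (v ^ 2 - w ^ 2) / (4 * r) - v * b) by lra.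
  subst wt vt wtr a; field; repeat split; assumption.
Qed.

Definition riemann_transport (m : R) (Om : R -> R -> Prop) (w v : R -> R -> R) : Prop :=
  forall r t, Om r t -> Dt w r t + w r t * Dr w r t = - m * (w r t ^ 2 - v r t ^ 2) / (4 * r).

Definition wave_indicator (m : R) (w v : R -> R -> R) : R -> R -> R :=
  fun r t => Dr w r t + m * (w r t ^ 2 - v r t ^ 2) / (4 * r * w r t).

Section RiemannPair.

Variables (m : R) (Om : R -> R -> Prop) (w v : R -> R -> R).
Hypotheses (HOm : open_domain Om) (Hpos : forall r t, Om r t -> 0 < r)
  (Hw : smooth_on Om w) (Hv : smooth_on Om v)
  (Htw : riemann_transport m Om w v) (Htv : riemann_transport m Om v w).

Lemma riemann_transport_Dr r t : Om r t ->
  Dt (Dr w) r t = - Dr w r t ^ 2 - w r t * Dr (Dr w) r t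
    - m * (2 * (w r t * Dr w r t - v r t * Dr v r t) * r - (w r t ^ 2 - v r t ^ 2)) / (4 * r ^ 2).
Proof.
  intros H; pose proof (Hpos r t H) as Hr.
  rewrite <- (smooth_on_Dr_Dt Om HOm) by assumption; unfold Dr at 1.
  rewrite (Derive_ext_loc _
    (fun s => - (w s t * Dr w s t) - m * (w s t ^ 2 - v s t ^ 2) / (4 * s))).
  - pose proof (proj1 (Hw nil r t H)) as Hwr; pose proof (proj1 (Hw (true :: nil) r t H)) as Hwrr.
    pose proof (proj1 (Hv nil r t H)) as Hvr; cbn [Diter] in Hwr, Hwrr, Hvr.
    apply is_derive_unique; auto_derive.
    + repeat split; assumption || lra.
    + unfold Dr; field; lra.
  - generalize (open_domain_locally_r Om HOm r t H); apply filter_imp; intros s Hs.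
    specialize (Htw s t Hs); lra.
Qed.

Lemma wave_indicator_derive_at_zero (X : R -> R) t :
  Om (X t) t -> is_derive X t (w (X t) t) -> w (X t) t <> 0 -> v (X t) t <> 0 ->
  wave_indicator m w v (X t) t = 0 ->
  is_derive (fun s => wave_indicator m w v (X s) s) t
    (m * v (X t) t ^ 2 / (2 * X t * w (X t) t) * wave_indicator m v w (X t) t).
Proof.
  intros HXt HX Hw0 Hv0 Hzero.
  assert (Hr0 : X t <> 0) by (pose proof (Hpos _ _ HXt); lra).
  pose proof (smooth_on_is_derive_along Om HOm w (true :: nil) X t _ Hw HXt HX) as Ha.
  pose proof (smooth_on_is_derive_along Om HOm w nil X t _ Hw HXt HX) as Hdw.
  pose proof (smooth_on_is_derive_along Om HOm v nil X t _ Hv HXt HX) as Hdv.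
  cbn [Diter] in Ha, Hdw, Hdv.
  unfold wave_indicator at 2.
  rewrite <- (indicator_riccati_identity m (X t) (w (X t) t) (v (X t) t)
    (Dr w (X t) t) (Dr v (X t) t) (Dr (Dr w) (X t) t)
    (Dt w (X t) t) (Dt v (X t) t) (Dt (Dr w) (X t) t)); try assumption.
  - exact (is_derive_indicator_expr m _ _ _ X t _ _ _ _ Ha Hdw Hdv HX Hr0 Hw0).
  - apply Htw, HXt.
  - apply Htv, HXt.
  - apply riemann_transport_Dr, HXt.
Qed.

End RiemannPair.

Definition riemann_invariant (c : R) (rho u : R -> R -> R) : R -> R -> R :=
  fun r t => u r t + c * rho r t.

Section IsentropicGammaThree.

Variables (m : nat) (K : R) (Om : R -> R -> Prop) (rho u : R -> R -> R).
Hypotheses (HK : 0 < K) (HOm : open_domain Om) (Hpos : forall r t, Om r t -> 0 < r)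
  (Hrho_s : smooth_on Om rho) (Hu_s : smooth_on Om u)
  (Hrho_pos : forall r t, Om r t -> 0 < rho r t)
  (Heuler : euler_solution m K 3 Om rho u)
  (Hsuper : forall r t, Om r t ->
     speed1 K 3 rho u r t < speed2 K 3 rho u r t /\ speed2 K 3 rho u r t < 0).

Local Notation w1 := (riemann_invariant (- sqrt (K * 3)) rho u).
Local Notation w2 := (riemann_invariant (sqrt (K * 3)) rho u).

Lemma Dr_pressure_gamma3 r t : Om r t ->
  Dr (pressure K 3 rho) r t = 3 * K * rho r t ^ 2 * Dr rho r t.
Proof.
  intros H; unfold Dr, pressure.
  rewrite (Derive_ext_loc _ (fun s => K * rho s t ^ 3)).
  - pose proof (proj1 (Hrho_s nil r t H)) as Hr; cbn [Diter] in Hr.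
    apply is_derive_unique; auto_derive; [exact Hr | simpl; ring].
  - generalize (open_domain_locally_r Om HOm r t H); apply filter_imp; intros s Hs.
    replace 3 with (INR 3) by (simpl; ring).
    rewrite Rpower_pow; [reflexivity | apply (Hrho_pos s t Hs)].
Qed.

Lemma euler_nonconservative r t : Om r t ->
  Dt rho r t = - (INR m / r * rho r t * u r t) - Dr rho r t * u r t - rho r t * Dr u r t /\
  Dt u r t = - (u r t * Dr u r t) - 3 * K * rho r t * Dr rho r t.
Proof.
  intros H; pose proof (Hpos r t H) as Hr; pose proof (Hrho_pos r t H) as Hrho.
  assert (Hrm : 0 < r ^ m) by (apply pow_lt, Hr).
  destruct (Hrho_s nil r t H) as [Hrho_r [Hrho_t _]]; destruct (Hu_s nil r t H) as [Hu_r [Hu_t _]].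
  cbn [Diter] in Hrho_r, Hrho_t, Hu_r, Hu_t.
  assert (Hpow : INR m * r ^ Init.Nat.pred m = INR m / r * r ^ m).
  { destruct m; simpl; field; lra. }
  assert (Dmass_t : Dt (fun r t => r ^ m * rho r t) r t = r ^ m * Dt rho r t).
  { unfold Dt; apply is_derive_unique; auto_derive; [exact Hrho_t | ring]. }
  assert (Dmass_r : Dr (fun r t => r ^ m * rho r t * u r t) r t
      = INR m / r * r ^ m * rho r t * u r t + r ^ m * (Dr rho r t * u r t + rho r t * Dr u r t)).
  { unfold Dr; apply is_derive_unique; auto_derive; [auto | rewrite Hpow; ring]. }
  assert (Dmom_t : Dt (fun r t => r ^ m * rho r t * u r t) r t
      = r ^ m * (Dt rho r t * u r t + rho r t * Dt u r t)).
  { unfold Dt; apply is_derive_unique; auto_derive; [auto | ring]. }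
  assert (Dmom_r : Dr (fun r t => r ^ m * rho r t * u r t ^ 2) r t
      = INR m / r * r ^ m * rho r t * u r t ^ 2
        + r ^ m * (Dr rho r t * u r t ^ 2 + 2 * rho r t * u r t * Dr u r t)).
  { unfold Dr; apply is_derive_unique; auto_derive; [auto | rewrite Hpow; simpl; ring]. }
  destruct (Heuler r t H) as [Emass Emom].
  rewrite Dmass_t, Dmass_r in Emass.
  rewrite Dmom_t, Dmom_r, (Dr_pressure_gamma3 r t H) in Emom.
  assert (Erho : Dt rho r t
      = - (INR m / r * rho r t * u r t) - Dr rho r t * u r t - rho r t * Dr u r t).
  { apply (Rmult_eq_reg_l (r ^ m)); [nra | lra]. }
  split; [exact Erho |].
  rewrite Erho in Emom.
  apply (Rmult_eq_reg_l (r ^ m * rho r t)); [nra | apply Rgt_not_eq, Rmult_lt_0_compat; assumption].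
Qed.

Lemma hh_gamma3 r t : Om r t -> hh K 3 rho r t = sqrt (K * 3) * rho r t.
Proof.
  intros H; unfold hh; replace ((3 - 1) / 2) with 1 by field.
  rewrite Rpower_1; [reflexivity | apply (Hrho_pos r t H)].
Qed.

Lemma Dr_hh_gamma3 r t : Om r t -> Dr (hh K 3 rho) r t = sqrt (K * 3) * Dr rho r t.
Proof.
  intros H; unfold Dr; rewrite (Derive_ext_loc _ (fun s => sqrt (K * 3) * rho s t)).
  - apply Derive_scal.
  - generalize (open_domain_locally_r Om HOm r t H); apply filter_imp; intros s Hs.
    apply hh_gamma3, Hs.
Qed.

Lemma Dr_riemann_invariant c r t : Om r t ->
  Dr (riemann_invariant c rho u) r t = Dr u r t + c * Dr rho r t.
Proof. exact (smooth_on_Diter_lin Om HOm u rho c (true :: nil) r t Hu_s Hrho_s). Qed.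

Lemma Dt_riemann_invariant c r t : Om r t ->
  Dt (riemann_invariant c rho u) r t = Dt u r t + c * Dt rho r t.
Proof. exact (smooth_on_Diter_lin Om HOm u rho c (false :: nil) r t Hu_s Hrho_s). Qed.

Lemma riemann_invariant_transport c d : c * c = 3 * K -> c + d = 0 ->
  riemann_transport (INR m) Om (riemann_invariant c rho u) (riemann_invariant d rho u).
Proof.
  intros Hc Hcd r t H; pose proof (Hpos r t H) as Hr.
  replace d with (- c) by lra.
  rewrite Dt_riemann_invariant, Dr_riemann_invariant by exact H.
  destruct (euler_nonconservative r t H) as [-> ->].
  unfold riemann_invariant; rewrite <- Hc; field; lra.
Qed.

Lemma riemann_invariant_indicator_derive_at_zero c d (X : R -> R) t :
  c * c = 3 * K -> c + d = 0 -> Om (X t) t ->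
  is_derive X t (riemann_invariant c rho u (X t) t) ->
  riemann_invariant c rho u (X t) t <> 0 -> riemann_invariant d rho u (X t) t <> 0 ->
  wave_indicator (INR m) (riemann_invariant c rho u) (riemann_invariant d rho u) (X t) t = 0 ->
  is_derive
    (fun s => wave_indicator (INR m) (riemann_invariant c rho u) (riemann_invariant d rho u)
                (X s) s) t
    (INR m * riemann_invariant d rho u (X t) t ^ 2 / (2 * X t * riemann_invariant c rho u (X t) t)
     * wave_indicator (INR m) (riemann_invariant d rho u) (riemann_invariant c rho u) (X t) t).
Proof.
  intros Hc Hcd; apply (wave_indicator_derive_at_zero (INR m) Om); try assumption.
  - apply smooth_on_lin; assumption.
  - apply smooth_on_lin; assumption.
  - apply riemann_invariant_transport; assumption.
  - apply riemann_invariant_transport; [replace d with (- c) by lra; lra | lra].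
Qed.

Lemma speed1_riemann_invariant r t : Om r t -> speed1 K 3 rho u r t = w1 r t.
Proof. intros H; unfold speed1, riemann_invariant; rewrite hh_gamma3 by exact H; ring. Qed.

Lemma speed2_riemann_invariant r t : Om r t -> speed2 K 3 rho u r t = w2 r t.
Proof. intros H; unfold speed2, riemann_invariant; rewrite hh_gamma3 by exact H; ring. Qed.

Lemma alpha_wave_indicator r t : Om r t -> alpha m K 3 rho u r t = wave_indicator (INR m) w2 w1 r t.
Proof.
  intros H; pose proof (Hpos r t H) as Hr; pose proof (proj2 (Hsuper r t H)) as Hc2.
  unfold alpha, wave_indicator; rewrite Dr_riemann_invariant, Dr_hh_gamma3 by exact H.
  rewrite speed2_riemann_invariant in * by exact H; rewrite hh_gamma3 by exact H.
  unfold riemann_invariant in *; field; lra.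
Qed.

Lemma beta_wave_indicator r t : Om r t -> beta m K 3 rho u r t = wave_indicator (INR m) w1 w2 r t.
Proof.
  intros H; pose proof (Hpos r t H) as Hr; destruct (Hsuper r t H) as [Hc12 Hc2].
  unfold beta, wave_indicator; rewrite Dr_riemann_invariant, Dr_hh_gamma3 by exact H.
  rewrite speed1_riemann_invariant in * by exact H.
  rewrite speed2_riemann_invariant in Hc12, Hc2 by exact H.
  rewrite hh_gamma3 by exact H.
  unfold riemann_invariant in *; field; lra.
Qed.

Lemma two_wave_derive_at_zero r0 a b psi t :
  char_curve (speed2 K 3 rho u) Om r0 a b psi -> a < t < b ->
  alpha m K 3 rho u (psi t) t = 0 ->
  is_derive (fun s => alpha m K 3 rho u (psi s) s) t
    (INR m * speed1 K 3 rho u (psi t) t ^ 2 / (2 * psi t * speed2 K 3 rho u (psi t) t)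
     * beta m K 3 rho u (psi t) t).
Proof.
  intros [_ [_ Hpsi]] Ht Hzero; destruct (Hpsi t Ht) as [HOmt Hderive].
  destruct (Hsuper _ _ HOmt) as [Hc12 Hc2].
  rewrite alpha_wave_indicator in Hzero by exact HOmt.
  rewrite speed2_riemann_invariant in Hderive, Hc12, Hc2 |- * by exact HOmt.
  rewrite speed1_riemann_invariant in Hc12 |- * by exact HOmt.
  rewrite beta_wave_indicator by exact HOmt.
  apply (is_derive_ext_loc (fun s => wave_indicator (INR m) w2 w1 (psi s) s)).
  - apply (locally_interval _ t a b); [apply Ht | apply Ht |]; intros s Has Hsb.
    symmetry; apply alpha_wave_indicator, (Hpsi s (conj Has Hsb)).
  - apply riemann_invariant_indicator_derive_at_zero; try assumption; try lra.
    rewrite sqrt_sqrt; lra.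
Qed.

Lemma one_wave_derive_at_zero r0 a b xi t :
  char_curve (speed1 K 3 rho u) Om r0 a b xi -> a < t < b ->
  beta m K 3 rho u (xi t) t = 0 ->
  is_derive (fun s => beta m K 3 rho u (xi s) s) t
    (INR m * speed2 K 3 rho u (xi t) t ^ 2 / (2 * xi t * speed1 K 3 rho u (xi t) t)
     * alpha m K 3 rho u (xi t) t).
Proof.
  intros [_ [_ Hxi]] Ht Hzero; destruct (Hxi t Ht) as [HOmt Hderive].
  destruct (Hsuper _ _ HOmt) as [Hc12 Hc2].
  rewrite beta_wave_indicator in Hzero by exact HOmt.
  rewrite speed1_riemann_invariant in Hderive, Hc12 |- * by exact HOmt.
  rewrite speed2_riemann_invariant in Hc12, Hc2 |- * by exact HOmt.
  rewrite alpha_wave_indicator by exact HOmt.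
  apply (is_derive_ext_loc (fun s => wave_indicator (INR m) w1 w2 (xi s) s)).
  - apply (locally_interval _ t a b); [apply Ht | apply Ht |]; intros s Has Hsb.
    symmetry; apply beta_wave_indicator, (Hxi s (conj Has Hsb)).
  - apply riemann_invariant_indicator_derive_at_zero; try assumption; try lra.
    rewrite Rmult_opp_opp, sqrt_sqrt; lra.
Qed.

End IsentropicGammaThree.

Lemma riccati_coefficient_neg k x v w : 0 < k -> 0 < x -> v < 0 -> w < 0 ->
  k * v ^ 2 / (2 * x * w) < 0.
Proof.
  intros Hk Hx Hv Hw.
  assert (Hnum : 0 < k * v ^ 2) by (apply Rmult_lt_0_compat; [exact Hk | nra]).
  assert (Hden : 2 * x * w < 0) by nra.
  unfold Rdiv; apply Rmult_pos_neg; [exact Hnum | apply Rinv_lt_0_compat, Hden].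
Qed.

Theorem mainTheorem5
  (m : nat) (K : R) (Om : R -> R -> Prop) (rho u : R -> R -> R)
  (Hm : m = 1%nat \/ m = 2%nat) (HK : 0 < K)
  (HOm : open_domain Om) (HOm_pos : forall r t, Om r t -> 0 < r)
  (Hrho_s : smooth_on Om rho) (Hu_s : smooth_on Om u)
  (Hrho_pos : forall r t, Om r t -> 0 < rho r t)
  (Heuler : euler_solution m K 3 Om rho u)
  (Hsuper : forall r t, Om r t ->
     speed1 K 3 rho u r t < speed2 K 3 rho u r t /\ speed2 K 3 rho u r t < 0) :
  (* (i) 1-wave R  ==> 2-wave can only change from R to C *)
  (forall r0 a b psi tstar eps,
     char_curve (speed2 K 3 rho u) Om r0 a b psi ->
     a <= tstar - eps -> tstar + eps <= b ->
     0 < beta m K 3 rho u (psi tstar) tstar ->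
     ~ change_C_to_R (fun t => alpha m K 3 rho u (psi t) t) tstar eps) /\
  (* (i) 2-wave R  ==> 1-wave can only change from R to C *)
  (forall r0 a b xi tstar eps,
     char_curve (speed1 K 3 rho u) Om r0 a b xi ->
     a <= tstar - eps -> tstar + eps <= b ->
     0 < alpha m K 3 rho u (xi tstar) tstar ->
     ~ change_C_to_R (fun t => beta m K 3 rho u (xi t) t) tstar eps) /\
  (* (ii) 1-wave C  ==> 2-wave can only change from C to R *)
  (forall r0 a b psi tstar eps,
     char_curve (speed2 K 3 rho u) Om r0 a b psi ->
     a <= tstar - eps -> tstar + eps <= b ->
     beta m K 3 rho u (psi tstar) tstar < 0 ->
     ~ change_R_to_C (fun t => alpha m K 3 rho u (psi t) t) tstar eps) /\
  (* (ii) 2-wave C  ==> 1-wave can only change from C to R *)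
  (forall r0 a b xi tstar eps,
     char_curve (speed1 K 3 rho u) Om r0 a b xi ->
     a <= tstar - eps -> tstar + eps <= b ->
     alpha m K 3 rho u (xi tstar) tstar < 0 ->
     ~ change_R_to_C (fun t => beta m K 3 rho u (xi t) t) tstar eps).
Proof.
  assert (Hm0 : 0 < INR m) by (destruct Hm as [-> | ->]; simpl; lra).
  assert (Hcoef : forall r t, Om r t ->
      INR m * speed1 K 3 rho u r t ^ 2 / (2 * r * speed2 K 3 rho u r t) < 0 /\
      INR m * speed2 K 3 rho u r t ^ 2 / (2 * r * speed1 K 3 rho u r t) < 0).
  { intros r t H; destruct (Hsuper r t H); pose proof (HOm_pos r t H).
    split; apply riccati_coefficient_neg; lra. }
  pose proof (two_wave_derive_at_zero m K Om rho u HK HOm HOm_pos Hrho_s Hu_s Hrho_pos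
    Heuler Hsuper) as Hwave2.
  pose proof (one_wave_derive_at_zero m K Om rho u HK HOm HOm_pos Hrho_s Hu_s Hrho_pos
    Heuler Hsuper) as Hwave1.
  repeat split; intros r0 a b X tstar eps HX Ha Hb Hsign Hchange;
    assert (Ht : a < tstar < b) by (destruct Hchange; lra);
    pose proof (proj1 (proj2 Hchange)) as Hzero; cbv beta in Hzero;
    destruct (Hcoef _ _ (proj1 (proj2 (proj2 HX) tstar Ht))) as [Hcoef2 Hcoef1].
  - pose proof (change_C_to_R_derive_nonneg _ _ _ _ Hchange (Hwave2 _ _ _ _ _ HX Ht Hzero)); nra.
  - pose proof (change_C_to_R_derive_nonneg _ _ _ _ Hchange (Hwave1 _ _ _ _ _ HX Ht Hzero)); nra.
  - pose proof (change_R_to_C_derive_nonpos _ _ _ _ Hchange (Hwave2 _ _ _ _ _ HX Ht Hzero)); nra.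
  - pose proof (change_R_to_C_derive_nonpos _ _ _ _ Hchange (Hwave1 _ _ _ _ _ HX Ht Hzero)); nra.
Qed.
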